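(* Let $P$ be an irreducible semi-isotropic transition matrix on $\mathbb T=\mathbb T_q$, let $\mu$ be the associated probability measure on $\Gamma=\mathrm{Aff}(\mathbb T)$, and let $\nu$ be a $\mu$-invariant Radon measure on $\partial^*\mathbb T$. Then for all $k\ge 0$, $r\ge1$ and every $y\in T_{k,r}$, $$\nu\big(\Omega_0(y)\big)=\nu(\Omega_k)/|T_{k,r}|.$$
   Context: Tree notation: $\mathbb T=\mathbb T_q$ ($q\ge2$) is the homogeneous tree of degree $q+1$ with graph metric $d$, a fixed end $\omega$ and a root $o$. Each vertex $x$ has a unique neighbour $x^-$ (its predecessor) on the geodesic ray from $x$ to $\omega$. $\mathrm{hor}(o)=0$, $\mathrm{hor}(x)=\mathrm{hor}(x^-)+1$. Ancestors of $x$: $x,x^-,(x^-)^-,\dots$; $x\curlywedge y$ is the common ancestor of $x,y$ with maximal $\mathrm{hor}$; $\mathrm{up}(x,y)=\mathrm{hor}(x)-\mathrm{hor}(x\curlywedge y)$. $\partial\mathbb T$ is the space of ends, $\partial^*\mathbb T=\partial\mathbb T\setminus\{\omega\}$. For $\xi\in\partial^*\mathbb T$, $x\curlywedge\xi$ is the vertex of the bi-infinite geodesic from $\omega$ to $\xi$ which is an ancestor of $x$ and has maximal $\mathrm{hor}$, and $\mathrm{up}(x,\xi)=\mathrm{hor}(x)-\mathrm{hor}(x\curlywedge\xi)$. A transition matrix $P$ on $\mathbb T$ is semi-isotropic if $p(x,y)$ depends only on $(\mathrm{up}(x,y),\mathrm{up}(y,x))$. Sets: $T_{k,r}(x)=\{y:\mathrm{up}(x,y)=k,\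 \mathrm{up}(y,x)=r\}$, $\Omega_k(x)=\{\eta\in\partial^*\mathbb T:\mathrm{up}(x,\eta)=k\}$; $T_{k,r}=T_{k,r}(o)$, $\Omega_k=\Omega_k(o)$. Group: $\Gamma=\mathrm{Aff}(\mathbb T)$ is the group of all automorphisms of $\mathbb T$ fixing $\omega$ (locally compact, totally disconnected, acting transitively on $\mathbb T$ and on $\partial^*\mathbb T$); $dg$ is left Haar measure normalized so that the stabilizer $\Gamma_o$ of $o$ has measure $1$; $\mu(dg)=p(o,go)\,dg$. For a Radon measure $\nu$ on $\partial^*\mathbb T$, $\mu*\nu(E)=\int_\Gamma\nu(g^{-1}E)\,\mu(dg)$; $\nu$ is $\mu$-invariant if $\mu*\nu=\nu$. *)

From HB Require Import structures.
From mathcomp Require Import all_boot all_order all_algebra.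
From mathcomp Require Import all_classical all_reals all_analysis.
From mathcomp Require Import zify.
Set Implicit Arguments. Unset Strict Implicit. Unset Printing Implicit Defensive.
Import Order.TTheory GRing.Theory Num.Theory.
Local Open Scope classical_set_scope.
Local Open Scope ring_scope.

(* The homogeneous tree T_q together with a fixed end omega and a root o,
   described through the predecessor map x |-> x^- (the neighbour of x on
   the ray from x to omega): every vertex has exactly q "children" (vertices
   whose predecessor it is), hence degree q+1; any two vertices have a
   common ancestor (connectedness); hor is the horocycle index with
   hor(o) = 0, hor(x) = hor(x^-) + 1 (this also rules out cycles).
   These data determine (T_q, omega, o) up to isomorphism. *)
Record treeq (q : nat) := TreeQ {
  vtx :> pointedType;
  tpred : vtx -> vtx;
  troot : vtx;
  hor : vtx -> int;
  children : vtx -> seq vtx;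
  q_ge2 : (2 <= q)%N;
  hor_root : hor troot = 0;
  hor_pred : forall x, hor x = hor (tpred x) + 1;
  children_uniq : forall x, uniq (children x);
  children_size : forall x, size (children x) = q;
  children_spec : forall x y, (tpred y == x) = (y \in children x);
  tree_connected : forall x y : vtx, exists m n,
      iter m tpred x = iter n tpred y
}.

Section Tree.
Variables (q : nat) (T : treeq q).
Local Notation pr := (@tpred q T).
Local Notation o := (@troot q T).
Local Notation hr := (@hor q T).

Definition anc_pred (x y : T) : pred nat :=
  fun n => `[< exists m, iter n pr x = iter m pr y >].

Lemma anc_ex (x y : T) : exists n, anc_pred x y n.
Proof.
have [m [n e]] := tree_connected x y.
by exists m; apply/asboolP; exists n.
Qed.

(* x /\ y : the common ancestor of x and y with maximal hor *)
Definition meet (x y : T) : T := iter (ex_minn (anc_ex x y)) pr x.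
Definition up (x y : T) : int := hr x - hr (meet x y).

Definition Tkr_at (x : T) (k r : nat) : set T :=
  [set y | up x y = k%:Z /\ up y x = r%:Z].
Definition Tkr (k r : nat) : set T := Tkr_at o k r.

(* ---------- boundary d*T = ends other than omega ----------
   An end xi <> omega is identified with the bi-infinite geodesic from omega
   to xi, i.e. the sequence (xi n)_{n in Z} of its vertices, xi n being the
   one on horocycle n. *)
Definition is_geod (xi : int -> T) :=
  forall n : int, pr (xi (n + 1)) = xi n /\ hr (xi n) = n.

Definition bdry := {xi : int -> T | is_geod xi}.

Definition first_child (x : T) : T := nth x (children x) 0.

Lemma first_childP x : pr (first_child x) = x.
Proof.
apply/eqP; rewrite children_spec /first_child mem_nth //.
by rewrite children_size; have := q_ge2 T; case: q.
Qed.

Definition geod0 (n : int) : T :=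
  match n with
  | Posz m => iter m first_child o
  | Negz m => iter m.+1 pr o
  end.

Lemma hor_iter_pred x m : hr (iter m pr x) = hr x - m%:Z.
Proof.
elim: m => [|m IH] /=; first by rewrite subr0.
have := hor_pred (iter m pr x); rewrite IH; lia.
Qed.

Lemma hor_iter_child x m : hr (iter m first_child x) = hr x + m%:Z.
Proof.
elim: m => [|m IH] /=; first by rewrite addr0.
rewrite hor_pred first_childP IH; lia.
Qed.

Lemma geod0P : is_geod geod0.
Proof.
move=> [m|m]; split.
- have -> : (Posz m + 1) = Posz m.+1 by lia.
  by rewrite /= first_childP.
- by rewrite /= hor_iter_child hor_root add0r.
- case: m => [|m].
    by have -> : (Negz 0 + 1) = Posz 0 by lia.
  by have -> : (Negz m.+1 + 1) = Negz m by lia.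
- rewrite /= -/(iter m.+1 pr o) hor_iter_pred hor_root; lia.
Qed.

Definition bdry0 : bdry := exist _ geod0 geod0P.

HB.instance Definition _ := gen_eqMixin bdry.
HB.instance Definition _ := gen_choiceMixin bdry.
HB.instance Definition _ := isPointed.Build bdry bdry0.

Lemma geod_iter (xi : bdry) m : iter m pr (sval xi 0) = sval xi (- m%:Z).
Proof.
elim: m => [|m IH] //=; rewrite IH.
have -> : - (Posz m) = - Posz m.+1 + 1 by lia.
by have [] := svalP xi (- Posz m.+1).
Qed.

Definition banc_pred (x : T) (xi : bdry) : pred nat :=
  fun n => `[< exists m, iter n pr x = sval xi m >].

Lemma banc_ex x xi : exists n, banc_pred x xi n.
Proof.
have [m [n e]] := tree_connected x (sval xi 0).
by exists m; apply/asboolP; exists (- n%:Z); rewrite e geod_iter.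
Qed.

(* x /\ xi : the vertex of the geodesic from omega to xi which is an
   ancestor of x and has maximal hor *)
Definition bmeet (x : T) (xi : bdry) : T := iter (ex_minn (banc_ex x xi)) pr x.
Definition bup (x : T) (xi : bdry) : int := hr x - hr (bmeet x xi).

Definition Omega_at (x : T) (k : nat) : set bdry :=
  [set eta | bup x eta = k%:Z].
Definition Omega (k : nat) : set bdry := Omega_at o k.

(* Borel sigma-algebra of d*T: generated by the compact open sets Omega_0(z)
   (which form a countable basis of the topology). *)
Definition bdry_gens : set (set bdry) := range (fun z : T => Omega_at z 0).
Definition bdryM := g_sigma_algebraType bdry_gens.

(* ---------- the affine group Aff(T) ----------
   automorphisms of T fixing omega = bijections commuting with x |-> x^- *)
Record aff := Aff {
  afn : T -> T;
  ainv : T -> T;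
  afnK : cancel afn ainv;
  ainvK : cancel ainv afn;
  afn_pred : forall x, afn (pr x) = pr (afn x)
}.

Definition aff1 : aff := @Aff id id (fun _ => erefl) (fun _ => erefl)
  (fun _ => erefl).

HB.instance Definition _ := gen_eqMixin aff.
HB.instance Definition _ := gen_choiceMixin aff.
HB.instance Definition _ := isPointed.Build aff aff1.

(* Borel sigma-algebra of Aff(T) for the topology of pointwise convergence *)
Definition aff_gens : set (set aff) :=
  [set A | exists x y : T, A = [set g : aff | afn g x = y]].
Definition affM := g_sigma_algebraType aff_gens.

Definition stab_root : set affM := [set g : aff | afn g o = o].

Definition lmul (h : aff) (A : set affM) : set affM :=
  [set g : aff | exists2 a : aff, A a & forall x, afn g x = afn h (afn a x)].

Lemma iter_aff (g : aff) n x : afn g (iter n pr x) = iter n pr (afn g x).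
Proof. by elim: n => //= n <-; rewrite afn_pred. Qed.

Lemma hor_aff (g : aff) x : hr (afn g x) = hr x + hr (afn g o).
Proof.
have [m [n e]] := tree_connected x o.
have e' := congr1 (afn g) e; rewrite !iter_aff in e'.
have h1 := congr1 hr e; have h2 := congr1 hr e'.
rewrite !hor_iter_pred hor_root in h1; rewrite !hor_iter_pred in h2.
lia.
Qed.

Definition act_fun (g : aff) (xi : bdry) : int -> T :=
  fun n => afn g (sval xi (n - hr (afn g o))).

Lemma act_geod g xi : is_geod (act_fun g xi).
Proof.
move=> n; rewrite /act_fun; split.
- have [e _] := svalP xi (n - hr (afn g o)).
  by rewrite -afn_pred -e addrAC.
- have [_ e] := svalP xi (n - hr (afn g o)).
  by rewrite hor_aff e subrK.
Qed.

Definition act (g : aff) (xi : bdry) : bdry := exist _ (act_fun g xi) (act_geod g xi).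

End Tree.

Arguments Tkr {q T}.
Arguments Omega {q T}.
Arguments Omega_at {q T}.
Arguments stab_root {q T}.

Section Measures.
Variables (R : realType) (q : nat) (T : treeq q).

(* (mu * nu)(E) = int_Gamma nu(g^{-1} E) mu(dg), mu(dg) = p(o, g o) dg *)
Definition conv (lam : {measure set (affM T) -> \bar R}) (p : T -> T -> R)
    (nu : {measure set (bdryM T) -> \bar R}) (E : set (bdryM T)) : \bar R :=
  (\int[lam]_(g in [set: affM T])
     (nu (act g @^-1` E) * (p (troot T) (afn g (troot T)))%:E))%E.

Definition is_haar (lam : {measure set (affM T) -> \bar R}) : Prop :=
  (forall (h : aff T) (A : set (affM T)), measurable A ->
      lam (lmul h A) = lam A) /\ lam stab_root = 1%E.

Definition stochastic (p : T -> T -> R) : Prop :=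
  (forall x y, 0 <= p x y) /\
  (forall x, (\esum_(y in [set: T]) (p x y)%:E)%E = 1%E).

Definition irreducible (p : T -> T -> R) : Prop :=
  forall x y : T, exists (n : nat) (f : nat -> T),
    [/\ f 0%N = x, f n = y & forall i, (i < n)%N -> 0 < p (f i) (f i.+1)].

Definition semi_isotropic (p : T -> T -> R) : Prop :=
  exists F : int -> int -> R, forall x y, p x y = F (up x y) (up y x).

(* Radon = locally finite Borel measure (d*T is locally compact, second
   countable, with the Omega_0(z) as a basis of compact open sets) *)
Definition radon (nu : {measure set (bdryM T) -> \bar R}) : Prop :=
  forall xi : bdry T, exists z : T,
    Omega_at z 0 xi /\ (nu (Omega_at z 0) < +oo)%E.

Definition mu_invariant (lam : {measure set (affM T) -> \bar R})
    (p : T -> T -> R) (nu : {measure set (bdryM T) -> \bar R}) : Prop :=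
  forall E : set (bdryM T), measurable E -> conv lam p nu E = nu E.

End Measures.

From HB Require Import structures.
From mathcomp Require Import all_boot all_order all_algebra.
From mathcomp Require Import all_classical all_reals all_analysis.
From mathcomp Require Import finmap zify measurable_realfun.
Set Implicit Arguments. Unset Strict Implicit. Unset Printing Implicit Defensive.
Import Order.TTheory GRing.Theory Num.Theory.
Local Open Scope classical_set_scope.
Local Open Scope ring_scope.

(** An end in [Omega k] passes through exactly one vertex of horocycle
  [r - k], and that vertex lies in [T_{k,r}]; hence [Omega k] is the disjoint
  union of the [Omega_0(y)], [y] in the finite set [T_{k,r}].  The stabilizer
  of [o] acts transitively on [T_{k,r}] (swap the subtrees below two
  siblings, level by level), and [nu] is invariant under it: by
  [mu]-invariance [nu (Omega_0 z)] is the [lam]-integral of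
  [g |-> nu (Omega_0 (g^-1 z)) p(o, g o)], and left translation by an [h]
  fixing [o] preserves [lam] and, by semi-isotropy, [p(o, .)].  So all the
  [nu (Omega_0 y)] are equal. *)

Lemma ex_minn_exists_eqP (I : Type) (E : nat -> I -> Prop)
    (e : exists n, `[< exists i, E n i >]) k :
  ex_minn e = k <->
  (exists i, E k i) /\ (forall n, (n < k)%N -> forall i, ~ E n i).
Proof.
case: ex_minnP => n /asboolP En nmin; split.
  move=> <-; split => // m mn i Emi.
  by have := nmin m (asboolT (ex_intro _ i Emi)); rewrite leqNgt mn.
move=> [Ek kmin]; apply/eqP; rewrite eqn_leq nmin ?andbT; last exact/asboolP.
by rewrite leqNgt; apply/negP => /kmin; case: En => i Ei /(_ i).
Qed.

Section Geometry.
Variables (q : nat) (T : treeq q).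
Local Notation pr := (@tpred q T).
Local Notation o := (@troot q T).
Local Notation hr := (@hor q T).

Lemma mem_children_pred (x : T) : x \in children (pr x).
Proof. by rewrite -children_spec. Qed.

Lemma hor_iter_eq (x y : T) n m :
  iter n pr x = iter m pr y -> hr x - n%:Z = hr y - m%:Z.
Proof. by move/(congr1 hr); rewrite !hor_iter_pred. Qed.

Lemma upE (x y : T) : up x y = (ex_minn (anc_ex x y))%:Z.
Proof. by rewrite /up /meet hor_iter_pred; lia. Qed.

Lemma up_eqP (x y : T) (k : nat) : up x y = k%:Z <->
  (exists m, iter k pr x = iter m pr y) /\
  (forall n, (n < k)%N -> forall m, iter n pr x <> iter m pr y).
Proof.
by rewrite upE; split => [[] /ex_minn_exists_eqP | /ex_minn_exists_eqP ->].
Qed.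

Lemma geod_hor (xi : bdry T) n : hr (sval xi n) = n.
Proof. by case: (svalP xi n). Qed.

Lemma iter_pred_geod (xi : bdry T) n j :
  iter j pr (sval xi n) = sval xi (n - j%:Z).
Proof.
elim: j => [|j IH] /=; first by rewrite subr0.
rewrite IH; have [<- _] := svalP xi (n - j.+1%:Z); congr (pr (sval xi _)); lia.
Qed.

Lemma bup_eqP x (xi : bdry T) (k : nat) : bup x xi = k%:Z <->
  (exists m, iter k pr x = sval xi m) /\
  (forall n, (n < k)%N -> forall m, iter n pr x <> sval xi m).
Proof.
have -> : bup x xi = (ex_minn (banc_ex x xi))%:Z.
  by rewrite /bup /bmeet hor_iter_pred; lia.
by split => [[] /ex_minn_exists_eqP | /ex_minn_exists_eqP ->].
Qed.

Lemma Omega0P z (xi : bdry T) : Omega_at z 0 xi <-> sval xi (hr z) = z.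
Proof.
rewrite /Omega_at /= bup_eqP; split; last by move=> e; split=> //; exists (hr z).
by move=> [[m /= e] _]; rewrite e geod_hor.
Qed.

Lemma OmegaP k (xi : bdry T) : Omega k xi <->
  sval xi (- k%:Z) = iter k pr o /\
  (forall j, (j < k)%N -> forall m, iter j pr o <> sval xi m).
Proof.
rewrite /Omega /Omega_at /= bup_eqP; split; last first.
  by move=> [e kmin]; split=> //; exists (- k%:Z).
move=> [[m e] kmin]; split => //.
have := geod_hor xi m; rewrite -e hor_iter_pred hor_root => hm.
by rewrite e; congr (sval xi _); lia.
Qed.

Lemma TkrP k r (y : T) : Tkr k r y <->
  [/\ iter r pr y = iter k pr o,
      forall n, (n < r)%N -> forall m, iter n pr y <> iter m pr o &
      forall n, (n < k)%N -> forall m, iter n pr o <> iter m pr y].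
Proof.
split; last first.
  by move=> [e m1 m2]; split; apply/up_eqP; split => //; [exists r | exists k].
move=> [/up_eqP [[m e1] min1] /up_eqP [[m' e2] min2]]; split => //.
have h1 := hor_iter_eq e1; have h2 := hor_iter_eq e2.
rewrite hor_root in h1 h2.
have km : (k <= m')%N.
  by rewrite leqNgt; apply/negP => /min1 /(_ r); rewrite e2.
have rm : (r <= m)%N.
  by rewrite leqNgt; apply/negP => /min2 /(_ k); rewrite e1.
by have -> : r = m by lia.
Qed.

Lemma Tkr_hor k r y : Tkr k r y -> hr y = r%:Z - k%:Z.
Proof. by case/TkrP => /hor_iter_eq; rewrite hor_root; lia. Qed.

Lemma Omega0_Tkr_sub k r (y : T) : (1 <= r)%N -> Tkr k r y ->
  Omega_at y 0 `<=` Omega k.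
Proof.
move=> r1 Ty xi /Omega0P ey; have hy := Tkr_hor Ty.
case/TkrP: Ty => e min_y _; apply/OmegaP; split.
  by rewrite -e -ey iter_pred_geod; congr (sval xi _); lia.
move=> j jk m e'.
have hm := geod_hor xi m; rewrite -e' hor_iter_pred hor_root in hm.
case: (ltnP (r + j) k) => [rjk|krj].
  (* then [y] would be an ancestor of [o], although [up y o = r >= 1] *)
  have : iter (k - r - j)%N pr (sval xi m) = y.
    by rewrite iter_pred_geod -[in RHS]ey; congr (sval xi _); lia.
  rewrite -e' -iterD => ey2.
  by apply: (min_y 0%N r1 (k - r - j + j)%N); rewrite /= ey2.
have e2 : iter (r + j - k)%N pr y = sval xi m.
  by rewrite -ey iter_pred_geod; congr (sval xi _); lia.
by apply: (min_y (r + j - k)%N _ j); [lia | rewrite e2 e'].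
Qed.

Lemma Omega_Tkr_geod k r (xi : bdry T) : (1 <= r)%N -> Omega k xi ->
  Tkr k r (sval xi (r%:Z - k%:Z)).
Proof.
move=> r1 /OmegaP [e kmin]; apply/TkrP; split.
- by rewrite iter_pred_geod -e; congr (sval xi _); lia.
- move=> n nr m e'.
  have hm := hor_iter_eq e'; rewrite geod_hor hor_root in hm.
  apply: (kmin m _ (r%:Z - k%:Z - n%:Z)); first lia.
  by rewrite -e' iter_pred_geod.
- move=> n nk m e'; apply: (kmin n nk (r%:Z - k%:Z - m%:Z)).
  by rewrite e' iter_pred_geod.
Qed.

Lemma Omega_bigcup_Tkr k r : (1 <= r)%N ->
  Omega k = \bigcup_(y in @Tkr q T k r) Omega_at y 0.
Proof.
move=> r1; apply/seteqP; split => xi.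
  move=> Okxi; exists (sval xi (r%:Z - k%:Z)); first exact: Omega_Tkr_geod.
  by apply/Omega0P; rewrite geod_hor.
by move=> [y Ty]; apply: Omega0_Tkr_sub r1 Ty xi.
Qed.

Lemma Omega0_disjoint (y y' : T) : hr y = hr y' -> y != y' ->
  Omega_at y 0 `&` Omega_at y' 0 = set0.
Proof.
move=> hyy' /eqP yy'; apply/seteqP; split => // xi [/Omega0P e /Omega0P e'].
by apply: yy'; rewrite -e -e' hyy'.
Qed.

Lemma descendants_finite (a : T) d : finite_set [set x : T | iter d pr x = a].
Proof.
elim: d => [|d IH].
  by apply: (sub_finite_set _ (finite_set1 a)) => x /= ->.
apply: (sub_finite_set _ (bigcup_finite IH (fun w _ => finite_seq (children w)))).
move=> x /= e; exists (pr x); first by rewrite /= -iterSr.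
exact: mem_children_pred.
Qed.

Lemma Tkr_finite k r : finite_set (@Tkr q T k r).
Proof.
apply: (sub_finite_set _ (descendants_finite (iter k pr o) r)).
by move=> y /TkrP [].
Qed.

End Geometry.

Section Automorphisms.
Variables (q : nat) (T : treeq q).
Local Notation pr := (@tpred q T).
Local Notation o := (@troot q T).
Local Notation hr := (@hor q T).

Lemma aff_ext (f g : aff T) : afn f =1 afn g -> f = g.
Proof.
case: f g => [f1 f2 a1 a2 a3] [g1 g2 b1 b2 b3] /= e.
have E1 : f1 = g1 by apply: boolp.funext.
subst g1.
have E2 : f2 = g2 by apply: boolp.funext => x; rewrite -{1}(b2 x) a1.
subst g2; congr Aff; apply: boolp.Prop_irrelevance.
Qed.

Lemma ainv_pred (f : aff T) x : ainv f (pr x) = pr (ainv f x).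
Proof. by apply: (can_inj (@afnK _ _ f)); rewrite afn_pred !ainvK. Qed.

Lemma comp_afn_pred (f g : aff T) x :
  (afn f \o afn g) (pr x) = pr ((afn f \o afn g) x).
Proof. by rewrite /= !afn_pred. Qed.

Definition aff_comp (f g : aff T) : aff T :=
  @Aff _ T (afn f \o afn g) (ainv g \o ainv f)
    (can_comp (@afnK _ _ f) (@afnK _ _ g))
    (can_comp (@ainvK _ _ g) (@ainvK _ _ f)) (comp_afn_pred f g).

Definition aff_inv (f : aff T) : aff T :=
  @Aff _ T (ainv f) (afn f) (@ainvK _ _ f) (@afnK _ _ f) (ainv_pred f).

Lemma up_aff (g : aff T) x y : up (afn g x) (afn g y) = up x y.
Proof.
rewrite !upE; congr Posz; apply: eq_ex_minn => n.
rewrite /anc_pred; apply/asboolP/asboolP => -[m e]; exists m.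
  by move: e; rewrite -!iter_aff => /(can_inj (@afnK _ _ g)).
by rewrite -!iter_aff e.
Qed.

Lemma act_Omega0 (g : aff T) z :
  act g @^-1` Omega_at z 0 = Omega_at (ainv g z) 0.
Proof.
have h := hor_aff g (ainv g z); rewrite ainvK in h.
apply/seteqP; split => xi; rewrite /preimage /= !Omega0P /= /act_fun.
  have -> : hr (ainv g z) = hr z - hr (afn g o) by lia.
  by move=> e; rewrite -[in RHS]e afnK.
have -> : hr z - hr (afn g o) = hr (ainv g z) by lia.
by move=> ->; rewrite ainvK.
Qed.

Lemma pred_nth_children (c b : T) i : (i < q)%N -> pr (nth b (children c) i) = c.
Proof.
by move=> iq; apply/eqP; rewrite children_spec mem_nth // children_size.
Qed.

Lemma index_children_pred (x : T) : (index x (children (pr x)) < q)%N.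
Proof.
by have := index_mem x (children (pr x)); rewrite mem_children_pred children_size.
Qed.

(* [transport b d x] follows from [b] the path of child indices that leads
   from [iter d pr x] down to [x]. *)
Fixpoint transport (b : T) (d : nat) (x : T) : T :=
  if d is d'.+1
  then nth b (children (transport b d' (pr x))) (index x (children (pr x)))
  else b.

Lemma transport_pred b d x : pr (transport b d.+1 x) = transport b d (pr x).
Proof. by rewrite /= pred_nth_children // index_children_pred. Qed.

Lemma iter_transport b d x : iter d pr (transport b d x) = b.
Proof. by elim: d x => [|d IH] x //; rewrite iterSr transport_pred IH. Qed.

Lemma hor_transport b d x : hr (transport b d x) = hr b + d%:Z.
Proof.
by have := hor_iter_pred (transport b d x) d; rewrite iter_transport; lia.
Qed.

Lemma transportK a b d x : iter d pr x = a -> transport a d (transport b d x) = x.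
Proof.
elim: d x => [|d IH] x; first by move=> /= ->.
rewrite iterSr => e /=; rewrite -/(transport b d.+1 x) transport_pred IH //.
rewrite index_uniq ?children_uniq ?children_size ?index_children_pred //.
by rewrite nth_index // mem_children_pred.
Qed.

Definition below (x u : T) : bool := `[< exists d, iter d pr x = u >].

Lemma depth_iter x u d : iter d pr x = u -> `|hr x - hr u|%N = d.
Proof. by move=> <-; rewrite hor_iter_pred; lia. Qed.

Lemma belowP x u : below x u -> iter `|hr x - hr u|%N pr x = u.
Proof. by move/asboolP => [d e]; rewrite (depth_iter e). Qed.

Lemma iter_below x u d : iter d pr x = u -> below x u.
Proof. by move=> e; apply/asboolP; exists d. Qed.

Lemma below_pred u x : below (pr x) u -> below x u.
Proof. by move/asboolP => [d e]; apply: (@iter_below _ _ d.+1); rewrite iterSr. Qed.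

Lemma below_transport b d x : below (transport b d x) b.
Proof. exact: iter_below (iter_transport b d x). Qed.

Lemma pred_not_below u : ~~ below (pr u) u.
Proof.
apply/negP => /belowP /(congr1 hr); rewrite hor_iter_pred.
by have := hor_pred u; lia.
Qed.

Definition swap (u u' x : T) : T :=
  if below x u then transport u' `|hr x - hr u|%N x
  else if below x u' then transport u `|hr x - hr u|%N x else x.

Lemma swap_left u u' : swap u u' u = u'.
Proof. by rewrite /swap (iter_below (d := 0%N)) // subrr. Qed.

Lemma swap_out u u' x : ~~ below x u -> ~~ below x u' -> swap u u' x = x.
Proof. by move=> D D'; rewrite /swap (negbTE D) (negbTE D'). Qed.

Section Siblings.
Variables (u u' : T).
Hypotheses (pu : pr u = pr u') (uu' : u != u').

Lemma hor_siblings : hr u = hr u'.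
Proof. by rewrite hor_pred pu -hor_pred. Qed.

Lemma below_siblings x : below x u -> ~~ below x u'.
Proof.
move=> /belowP e; apply/negP => /belowP e'.
by move: uu'; rewrite -e -e' -hor_siblings eqxx.
Qed.

Lemma swapC x : swap u u' x = swap u' u x.
Proof.
rewrite /swap -hor_siblings; case: ifPn => D; case: ifPn => D' //.
by move: (below_siblings D); rewrite D'.
Qed.

Lemma swap_pred_below x : below x u -> swap u u' (pr x) = pr (swap u u' x).
Proof.
move=> D; rewrite /swap D.
move: (belowP D); case E: `|hr x - hr u|%N => [|d] /= e.
  have Nu : ~~ below (pr x) u by rewrite -e pred_not_below.
  have Nu' : ~~ below (pr x) u'.
    apply/negP => /belowP /(congr1 hr); rewrite hor_iter_pred -hor_siblings -e.
    by have := hor_pred x; lia.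
  by rewrite (negbTE Nu) (negbTE Nu') e pu.
have e2 : iter d pr (pr x) = u by rewrite -iterSr.
by rewrite (iter_below e2) (depth_iter e2) transport_pred.
Qed.

Lemma swapK_below x : below x u -> swap u u' (swap u u' x) = x.
Proof.
move=> D; rewrite {2}/swap D.
set d := `|hr x - hr u|%N.
have D' := below_transport u' d x.
have N : ~~ below (transport u' d x) u.
  by apply: contraL D'; apply: below_siblings.
rewrite /swap (negbTE N) D' hor_transport -hor_siblings.
have -> : `|(hr u + d%:Z - hr u)%R|%N = d by lia.
exact/transportK/belowP.
Qed.

End Siblings.

Lemma swap_pred u u' : pr u = pr u' -> u != u' ->
  forall x, swap u u' (pr x) = pr (swap u u' x).
Proof.
move=> pu uu' x; have u'u : u' != u by rewrite eq_sym.
case: (boolP (below x u)) => D; first exact: swap_pred_below.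
case: (boolP (below x u')) => D'.
  by rewrite !(swapC pu uu'); exact: swap_pred_below (esym pu) u'u x D'.
by rewrite !swap_out // (contra (@below_pred _ x)).
Qed.

Lemma swapK u u' : pr u = pr u' -> u != u' -> involutive (swap u u').
Proof.
move=> pu uu' x; have u'u : u' != u by rewrite eq_sym.
case: (boolP (below x u)) => D; first exact: swapK_below.
case: (boolP (below x u')) => D'.
  by rewrite !(swapC pu uu'); exact: swapK_below (esym pu) u'u x D'.
by rewrite !swap_out.
Qed.

Definition swap_aff u u' (pu : pr u = pr u') (uu' : u != u') : aff T :=
  @Aff _ T (swap u u') (swap u u') (swapK pu uu') (swapK pu uu')
    (swap_pred pu uu').

(* Swapping the siblings [iter j pr y] and [iter j pr y'] fixes [o] and
   reduces [j]. *)
Lemma stab_transitive_iter j (y y' : T) : iter j pr y = iter j pr y' ->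
  (forall i, (i < j)%N -> forall m, iter i pr y <> iter m pr o) ->
  (forall i, (i < j)%N -> forall m, iter i pr y' <> iter m pr o) ->
  exists g : aff T, afn g o = o /\ afn g y = y'.
Proof.
elim: j y y' => [|j IH] y y' /=; first by move=> -> _ _; exists (aff1 T).
set u := iter j pr y; set u' := iter j pr y' => pu Hy Hy'.
have Hy'j : forall i, (i < j)%N -> forall m, iter i pr y' <> iter m pr o.
  by move=> i ij; apply: Hy'; apply: ltnW.
have [uu'|uu'] := eqVneq u u'.
  by apply: IH => // i ij; apply: Hy; apply: ltnW.
pose s := swap_aff pu uu'.
have so : swap u u' o = o.
  by apply: swap_out; apply/negP => /asboolP [d e];
    [apply: (Hy j _ d) | apply: (Hy' j _ d)]; rewrite // e.
have [g [go gy]] : exists g : aff T, afn g o = o /\ afn g (swap u u' y) = y'.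
  apply: IH => //.
    by have := iter_aff s j y; rewrite /= -/u swap_left => <-.
  move=> i ij m e; apply: (Hy i (ltnW ij) m).
  have := iter_aff s i (swap u u' y); have := iter_aff s m o.
  by rewrite /= (swapK pu uu') so e => -> ->.
by exists (aff_comp g s); rewrite /= so go.
Qed.

Lemma Tkr_stab_transitive k r (y y' : T) : Tkr k r y -> Tkr k r y' ->
  exists g : aff T, afn g o = o /\ afn g y = y'.
Proof.
move=> /TkrP [e Hy _] /TkrP [e' Hy' _].
by apply: (stab_transitive_iter (j := r)); rewrite ?e ?e'.
Qed.

End Automorphisms.

Section Measurability.
Variables (q : nat) (T : treeq q).
Local Notation pr := (@tpred q T).
Local Notation o := (@troot q T).

Definition descend (a : T) (s : seq nat) : T :=
  foldl (fun x i => nth x (children x) i) a s.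

Lemma descend_surj m (x : T) : exists s, descend (iter m pr x) s = x.
Proof.
elim: m x => [|m IH] x; first by exists [::].
have [s e] := IH (pr x); exists (rcons s (index x (children (pr x)))).
rewrite iterSr /descend foldl_rcons -/(descend _ _) e.
by rewrite nth_index // mem_children_pred.
Qed.

Definition vtx_enum (n : nat) : T :=
  if choice.unpickle n is Some (a, s) then descend (iter a pr o) s else o.

Lemma vtx_enum_surj (x : T) : exists n, vtx_enum n = x.
Proof.
have [m [n e]] := tree_connected x o; have [s es] := descend_surj m x.
by exists (choice.pickle (n, s)); rewrite /vtx_enum choice.pickleK -e.
Qed.

Lemma measurable_afn_eq (x y : T) : measurable [set g : affM T | afn g x = y].
Proof. by apply: sub_sigma_algebra; exists x, y. Qed.

Lemma measurable_Omega0 (z : T) : measurable (Omega_at z 0 : set (bdryM T)).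
Proof. by apply: sub_sigma_algebra; exists z. Qed.

(* Countably many vertices: split according to the values of [ainv g z] and
   [afn g o]. *)
Lemma measurable_stab_pred (z : T) (P : T -> T -> Prop) :
  measurable [set g : affM T | P (ainv g z) (afn g o)].
Proof.
have -> : [set g : affM T | P (ainv g z) (afn g o)] =
  \bigcup_n \bigcup_m ([set g : affM T | afn g (vtx_enum n) = z] `&`
     [set g : affM T | afn g o = vtx_enum m] `&`
     [set _ : affM T | P (vtx_enum n) (vtx_enum m)]).
  apply/seteqP; split => g /=; last first.
    by move=> [n _ [m _ /= [[e1 e2] Pnm]]]; rewrite -e1 afnK e2.
  move=> Pg; have [n en] := vtx_enum_surj (ainv g z).
  have [m em] := vtx_enum_surj (afn g o).
  by exists n => //; exists m => //=; rewrite en em ainvK.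
apply: bigcupT_measurable => n; apply: bigcupT_measurable => m.
apply: measurableI; first by apply: measurableI; exact: measurable_afn_eq.
set C := [set _ : affM T | P (vtx_enum n) (vtx_enum m)].
have [H|H] := pselect (P (vtx_enum n) (vtx_enum m)).
  by have -> : C = setT by apply/seteqP; split.
by have -> : C = set0 by apply/seteqP; split.
Qed.

Lemma measurable_aff_comp (h : aff T) :
  measurable_fun [set: affM T] (fun g : affM T => aff_comp h g : affM T).
Proof.
apply: measurability => //.
move=> _ [_ [x [y ->]] <-].
rewrite (_ : _ `&` _ = [set g : affM T | afn g x = ainv h y]).
  exact: measurable_afn_eq.
apply/seteqP; split => g /=; first by move=> [_ /= <-]; rewrite afnK.
by move=> ->; rewrite ainvK.
Qed.

End Measurability.

Section Haar.
Variables (R : realType) (q : nat) (T : treeq q).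

Lemma preimage_aff_comp_inv (h : aff T) (A : set (affM T)) :
  (fun g : affM T => aff_comp (aff_inv h) g : affM T) @^-1` A = lmul h A.
Proof.
apply/seteqP; split => g /=.
  by move=> Ag; exists (aff_comp (aff_inv h) g) => // x /=; rewrite ainvK.
move=> [a Aa ea]; suff -> : aff_comp (aff_inv h) g = a by [].
by apply: aff_ext => x /=; rewrite ea afnK.
Qed.

Lemma haar_integral_lmul (lam : {measure set (affM T) -> \bar R}) (h : aff T)
    (f : affM T -> \bar R) : is_haar lam ->
  measurable_fun [set: affM T] f -> (forall g : affM T, (0 <= f g)%E) ->
  (\int[lam]_(g in [set: affM T]) f (aff_comp (aff_inv h) g) =
   \int[lam]_(g in [set: affM T]) f g)%E.
Proof.
move=> [lam_lmul _] mf f0.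
have mL := measurable_aff_comp (aff_inv h).
have := @ge0_integral_pushforward _ _ _ _ R _ mL lam setT f measurableT mf
  (fun g _ => f0 g).
rewrite preimage_setT => <-.
apply: eq_measure_integral => A mA _.
transitivity (lam (lmul h A)); last exact: lam_lmul.
by rewrite -preimage_aff_comp_inv.
Qed.

End Haar.

Section Invariance.
Variables (R : realType) (q : nat) (T : treeq q) (p : T -> T -> R).
Variables (lam : {measure set (affM T) -> \bar R})
  (nu : {measure set (bdryM T) -> \bar R}).
Local Notation o := (@troot q T).

Lemma semi_isotropic_stab (h : aff T) : semi_isotropic p -> afn h o = o ->
  forall w, p o (afn h w) = p o w.
Proof. by move=> [F pF] ho w; rewrite !pF -[in LHS]ho !up_aff. Qed.

Definition Omega0_weight (z : T) (g : affM T) : \bar R :=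
  (nu (Omega_at (ainv g z) 0) * (p o (afn g o))%:E)%E.

Lemma Omega0_weight_ge0 z g : stochastic p -> (0 <= Omega0_weight z g)%E.
Proof. by move=> [p_ge0 _]; apply: mule_ge0 => //; rewrite lee_fin. Qed.

Lemma measurable_Omega0_weight z : measurable_fun [set: affM T] (Omega0_weight z).
Proof.
move=> _ B _; rewrite setTI.
exact: measurable_stab_pred z (fun x y => B (nu (Omega_at x 0) * (p o y)%:E)%E).
Qed.

Lemma nu_Omega0_integral z : mu_invariant lam p nu ->
  nu (Omega_at z 0) = (\int[lam]_(g in [set: affM T]) Omega0_weight z g)%E.
Proof.
move=> nu_inv; rewrite -(nu_inv _ (measurable_Omega0 z)) /conv.
by apply: eq_integral => g _; rewrite act_Omega0.
Qed.

Lemma nu_Omega0_stab (h : aff T) y : stochastic p -> semi_isotropic p ->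
  is_haar lam -> mu_invariant lam p nu -> afn h o = o ->
  nu (Omega_at (afn h y) 0) = nu (Omega_at y 0).
Proof.
move=> p_stoch p_si lam_haar nu_inv ho.
have hinv_o : afn (aff_inv h) o = o by rewrite /= -{1}ho afnK.
rewrite !nu_Omega0_integral // -(haar_integral_lmul h lam_haar
  (measurable_Omega0_weight y) (fun g => Omega0_weight_ge0 y g p_stoch)).
apply: eq_integral => g _; rewrite /Omega0_weight /=.
by rewrite (semi_isotropic_stab p_si hinv_o).
Qed.

Lemma measure_Omega_Tkr k r : (1 <= r)%N ->
  nu (Omega k) = (\sum_(y \in @Tkr q T k r) nu (Omega_at y 0))%E.
Proof.
move=> r1; rewrite (Omega_bigcup_Tkr T k r1) measure_fin_bigcup //.
- exact: Tkr_finite.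
- apply/trivIsetP => y y' Ty Ty' yy'.
  by apply: Omega0_disjoint; rewrite // (Tkr_hor Ty) (Tkr_hor Ty').
- by move=> y _; exact: measurable_Omega0.
Qed.

End Invariance.

Lemma fsume_cst (R : realType) (I : choiceType) (A : set I) (c : \bar R) :
  finite_set A -> (\sum_(i \in A) c = (#|` fset_set A|)%fset%:R%:E * c)%E.
Proof.
move=> fA; rewrite fsbig_finite //= mule_natl.
by rewrite big_const_seq count_predT iter_addr_0.
Qed.

Theorem lemma4p2 (R : realType) (q : nat) (T : treeq q) (p : T -> T -> R)
    (lam : {measure set (affM T) -> \bar R})
    (nu : {measure set (bdryM T) -> \bar R}) :
  stochastic p -> irreducible p -> semi_isotropic p ->
  is_haar lam -> radon nu -> mu_invariant lam p nu ->
  forall (k r : nat), (1 <= r)%N ->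
  forall y : T, Tkr k r y ->
    nu (Omega_at y 0) =
      (nu (Omega k) * (((#|` fset_set (@Tkr q T k r)|)%fset%:R)^-1)%:E)%E.
Proof.
move=> p_stoch _ p_si lam_haar _ nu_inv k r r1 y Ty.
have Tkr_fin := Tkr_finite T k r.
have nu_Tkr_cst y' : Tkr k r y' -> nu (Omega_at y' 0) = nu (Omega_at y 0).
  move=> Ty'; have [g [go gy]] := Tkr_stab_transitive Ty Ty'.
  by rewrite -gy (nu_Omega0_stab y p_stoch p_si lam_haar nu_inv go).
have card_gt0 : (0 < #|` fset_set (@Tkr q T k r)|)%N.
  by rewrite cardfs_gt0; apply/fset0Pn; exists y; rewrite in_fset_set // in_setE.
rewrite (measure_Omega_Tkr _ _ r1) (eq_fsbigr (fun _ => nu (Omega_at y 0))); last first.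
  by move=> y'; rewrite in_setE; exact: nu_Tkr_cst.
rewrite fsume_cst //.
by rewrite muleC muleA -EFinM mulVf ?pnatr_eq0 -?lt0n // mul1e.
Qed.
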